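(* Let $\varrho=\rho_1\otimes\cdots\otimes\rho_n$ be a product state on $\mathcal K=\bigotimes_{i=1}^n\mathcal H_i$ (finite-dimensional Hilbert spaces). For $1\le i\ne j\le n$ let $X_{ij}=X_{ji}$ be an observable on $\mathcal K$ acting nontrivially only on the $i$th and $j$th tensor components. Define $X_i=\sum_{j\ne i}X_{ij}$ and $X=\sum_{i\ne j}X_{ij}=\sum_iX_i$. Then $$\mathrm{Var}_\varrho[X]\le4\sum_{i=1}^n\mathbb E_\varrho[(\mathcal D_iX_i)^2]=4\sum_{i=1}^n\mathbb E_\varrho[X_i^2]-4\sum_{i=1}^n\mathbb E_{\varrho\otimes\varrho}\big[(X_i\otimes I)F_i(X_i\otimes I)F_i\big].$$
   Context: $\mathbb E_\tau[Y]=\mathrm{Tr}[\tau Y]$, $\mathrm{Var}_\varrho[X]=\mathbb E_\varrho[X^2]-\mathbb E_\varrho[X]^2$. For $i\in[n]$, $\mathcal E_iY=\mathrm{Tr}_i[(\rho_i\otimes I)Y]$, regarded as an operator on $\mathcal K$ by tensoring with the identity on $\mathcal H_i$, and $\mathcal D_iY=Y-\mathcal E_iY$. $F_i$ is the swap operator on $\mathcal K\otimes\mathcal K$ exchanging the $i$th tensor component of the first copy with the $i$th tensor component of the second copy. ''Acting nontrivially only on components $i,j$'' means the operator has the form $Y\otimes I$ with $Y$ acting on $\mathcal H_i\otimes\mathcal H_j$ and $I$ the identity on the remaining factors. *)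

From mathcomp Require Import all_boot all_order all_algebra.
Set Implicit Arguments. Unset Strict Implicit. Unset Printing Implicit Defensive.
Import Order.TTheory GRing.Theory Num.Theory.
Local Open Scope ring_scope.

Section Ops.
Variable C : numClosedFieldType.

(* linear operators on C^T, as matrices indexed by the finite basis T *)
Definition op (T : finType) := T -> T -> C.

Definition q_opmul (T : finType) (A B : op T) : op T :=
  fun x y => \sum_z A x z * B z y.
Definition q_opid (T : finType) : op T := fun x y => (x == y)%:R.
Definition q_optr (T : finType) (A : op T) : C := \sum_x A x x.
Definition q_hermitian (T : finType) (A : op T) : Prop :=
  forall x y, A y x = (A x y)^*.
Definition q_psd (T : finType) (A : op T) : Prop :=
  forall v : T -> C, 0 <= \sum_x \sum_y (v x)^* * A x y * v y.
Definition q_density (T : finType) (A : op T) : Prop := q_psd A /\ q_optr A = 1.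
Definition q_expect (T : finType) (tau Y : op T) : C := q_optr (q_opmul tau Y).
Definition q_variance (T : finType) (rho A : op T) : C :=
  q_expect rho (q_opmul A A) - (q_expect rho A) ^+ 2.
Definition q_optensor (T U : finType) (A : op T) (B : op U) : op (T * U)%type :=
  fun x y => A x.1 y.1 * B x.2 y.2.
End Ops.

Section Tensor.
Variable C : numClosedFieldType.
Variables (n : nat) (d : 'I_n -> nat).

(* basis of K = (x)_i H_i, H_i = C^(d i) *)
Definition q_idx := {dffun forall i : 'I_n, 'I_(d i)}.

Definition q_upd (x : q_idx) (i : 'I_n) (a : 'I_(d i)) : q_idx :=
  [ffun j => dfwith (fun k => x k) a j].

Definition q_prod_state (rho : forall i : 'I_n, op C 'I_(d i)) : op C q_idx :=
  fun x y => \prod_i rho i (x i) (y i).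

(* E_i Y = Tr_i[(rho_i (x) I) Y] (x) I_{H_i} *)
Definition q_condexp (rho : forall i : 'I_n, op C 'I_(d i)) (i : 'I_n)
    (Y : op C q_idx) : op C q_idx :=
  fun x y => (x i == y i)%:R *
    \sum_(a : 'I_(d i)) \sum_(b : 'I_(d i)) rho i a b * Y (q_upd x b) (q_upd y a).

Definition q_Dop (rho : forall i : 'I_n, op C 'I_(d i)) (i : 'I_n)
    (Y : op C q_idx) : op C q_idx :=
  fun x y => Y x y - q_condexp rho i Y x y.

(* F_i on K (x) K: swaps the i-th components of the two copies *)
Definition q_swapop (i : 'I_n) : op C (q_idx * q_idx)%type :=
  fun p q => ((p.1 == q_upd q.1 (q.2 i)) && (p.2 == q_upd q.2 (q.1 i)))%:R.

(* A = Y (x) I with Y acting on H_i (x) H_j *)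
Definition q_acts_on2 (i j : 'I_n) (A : op C q_idx) : Prop :=
  exists Y : op C ('I_(d i) * 'I_(d j))%type, forall x y,
    A x y = Y (x i, x j) (y i, y j) *
            [forall k, ((k != i) && (k != j)) ==> (x k == y k)]%:R.
End Tensor.

(* The partial expectations E_k preserve
   E_rho, commute with each other, and satisfy E_k (A B) = A E_k B whenever A acts
   trivially on H_k; composing all of them sends X to the scalar E_rho[X].  Hence
   E[(D_k V)^2] = E[V^2] - E[V E_k V] = E[V^2] - E[(E_k V)^2], which is >= 0 for
   Hermitian V because the product of positive states is positive (via a Gram
   factorisation of each rho_i).  Telescoping along E_(k_1) ... E_(k_m) X, and using
   D_k (E_s X) = E_s (D_k X), gives Var[X] <= sum_k E[(D_k X)^2].  Since X_ij acts
   trivially on H_k for k outside {i, j}, D_k X = 2 D_k X_k, whence the factor 4.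
   The second form is the swap trick E_(rho (x) rho)[(Y (x) I) F_k (Y (x) I) F_k]
   = E_rho[Y E_k Y]. *)

From mathcomp Require Import all_boot all_order all_algebra.
From mathcomp Require Import sesquilinear spectral ring.
From Stdlib Require Import FunctionalExtensionality.
Set Implicit Arguments.
Unset Strict Implicit.
Unset Printing Implicit Defensive.
Import Order.TTheory GRing.Theory Num.Theory.
Local Open Scope ring_scope.

Section SiteUpdate.
Variables (n : nat) (d : 'I_n -> nat).
Implicit Types (x y z : q_idx d) (k l : 'I_n).

Lemma q_upd_same x k (a : 'I_(d k)) : q_upd x a k = a.
Proof. by rewrite ffunE dfwith_in. Qed.

Lemma q_upd_other x k (a : 'I_(d k)) l : k != l -> q_upd x a l = x l.
Proof. by move=> kl; rewrite ffunE dfwith_out. Qed.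

Lemma q_upd_upd x k (a b : 'I_(d k)) : q_upd (q_upd x a) b = q_upd x b.
Proof.
apply/ffunP => l; have [<-|kl] := eqVneq k l; first by rewrite !q_upd_same.
by rewrite !q_upd_other.
Qed.

Lemma q_upd_eq x k (a : 'I_(d k)) : x k = a -> q_upd x a = x.
Proof.
move=> xka; apply/ffunP => l; have [<-|kl] := eqVneq k l.
  by rewrite q_upd_same.
by rewrite q_upd_other.
Qed.

Lemma q_upd_id x k : q_upd x (x k) = x.
Proof. exact: q_upd_eq. Qed.

Lemma q_updC x k l (a : 'I_(d k)) (b : 'I_(d l)) : k != l ->
  q_upd (q_upd x a) b = q_upd (q_upd x b) a.
Proof.
move=> kl; apply/ffunP => j; have [<-|kj] := eqVneq k j.
  by rewrite q_upd_other 1?eq_sym // !q_upd_same.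
have [<-|lj] := eqVneq l j; first by rewrite q_upd_same q_upd_other // q_upd_same.
by rewrite !q_upd_other.
Qed.

Lemma big_q_upd {V : nmodType} {k} (c : 'I_(d k)) (F : q_idx d -> V) :
  \sum_(y : q_idx d) F y = \sum_(x : q_idx d | x k == c) \sum_(a : 'I_(d k)) F (q_upd x a).
Proof.
rewrite exchange_big /= (partition_big (fun y : q_idx d => y k) predT) //=.
apply: eq_bigr => a _.
rewrite (reindex_onto (fun x => q_upd x a) (fun y => q_upd y c)) /=; last first.
  by move=> y /eqP <-; rewrite q_upd_upd q_upd_id.
apply: eq_bigl => x; rewrite q_upd_same eqxx q_upd_upd.
by apply/eqP/eqP => [<-|<-]; rewrite ?q_upd_same ?q_upd_upd ?q_upd_id.
Qed.

Lemma big_q_idx_dim0 {V : nmodType} k (F : q_idx d -> V) :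
  d k = 0%N -> \sum_(y : q_idx d) F y = 0.
Proof. by move=> dk0; apply: big1 => y _; move: (y k); rewrite dk0 => -[]. Qed.

Lemma q_idx_upd_ind (P : q_idx d -> Prop) x z :
  (forall y k (a : 'I_(d k)), P y -> P (q_upd y a)) -> P x -> P z.
Proof.
move=> Pupd; suff IH m y : (forall k : 'I_n, (m <= k)%N -> y k = z k) -> P y -> P z.
  by apply: (IH n) => k; rewrite leqNgt ltn_ord.
elim: m y => [|m IH] y yz Py; first by have -> : z = y by apply/ffunP => k; rewrite yz.
have [mn|nm] := ltnP m n; last first.
  by apply: (IH y) => // k mk; have := leq_trans nm mk; rewrite leqNgt ltn_ord.
apply: (IH (q_upd y (z (Ordinal mn)))) => [k mk|]; last exact: Pupd.
have [<-|mk'] := eqVneq (Ordinal mn) k; first by rewrite q_upd_same.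
by rewrite q_upd_other // yz // ltn_neqAle mk andbT.
Qed.

End SiteUpdate.

Lemma sum_dffun_prod {R : comPzSemiRingType} {I : finType} {T_ : I -> finType}
    (F : forall i, T_ i -> R) :
  \sum_(x : {dffun forall i, T_ i}) \prod_i F i (x i) = \prod_i \sum_(a : T_ i) F i a.
Proof.
pose P_ i := [ffun a : T_ i => F i a].
rewrite (reindex (@dffun_of_fprod _ T_)); last exact/onW_bij/dffun_of_fprod_bij.
transitivity (\sum_(t : fprod T_) \prod_(i in I) P_ i (t i)).
  by apply: eq_bigr => t _; apply: eq_bigr => i _; rewrite /P_ !ffunE.
rewrite (big_fprod 1 (+%R : Monoid.add_law 0 *%R) P_).
transitivity (\prod_i \sum_(j | tagged_with T_ i j) untag 0 (P_ i) j).
  by rewrite bigA_distr_big_dep.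
apply: eq_bigr => i _.
transitivity (\sum_(a : T_ i) P_ i a); last by apply: eq_bigr => a _; rewrite ffunE.
by rewrite (big_tag (fun i a => P_ i a) i); apply: eq_bigl => j; rewrite inE.
Qed.

Lemma sum_delta {R : pzSemiRingType} {I : finType} (c : I) (F : I -> R) :
  \sum_b (b == c)%:R * F b = F c.
Proof.
rewrite (bigD1 c) //= eqxx mul1r big1 ?addr0 // => b /negbTE ->.
by rewrite mul0r.
Qed.

Lemma sum_pair {V : nmodType} {I J : finType} (F : (I * J)%type -> V) :
  \sum_p F p = \sum_i \sum_j F (i, j).
Proof. by rewrite pair_bigA; apply: eq_bigr => -[]. Qed.

Section Operators.
Variables (C : numClosedFieldType) (T : finType).
Implicit Types (tau A B M V : op C T).

Definition q_opsub A B : op C T := fun x y => A x y - B x y.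

Lemma q_opmulE A B x y : q_opmul A B x y = \sum_z A x z * B z y.
Proof. by []. Qed.

Lemma q_opmulBl A B M : q_opmul (q_opsub A B) M = q_opsub (q_opmul A M) (q_opmul B M).
Proof.
apply: functional_extensionality => x; apply: functional_extensionality => y.
by rewrite /q_opsub /q_opmul -sumrB; apply: eq_bigr => z _; rewrite mulrBl.
Qed.

Lemma q_opmulBr A B M : q_opmul M (q_opsub A B) = q_opsub (q_opmul M A) (q_opmul M B).
Proof.
apply: functional_extensionality => x; apply: functional_extensionality => y.
by rewrite /q_opsub /q_opmul -sumrB; apply: eq_bigr => z _; rewrite mulrBr.
Qed.

Lemma q_expectB tau A B :
  q_expect tau (q_opsub A B) = q_expect tau A - q_expect tau B.
Proof.
rewrite /q_expect /q_optr /q_opmul -sumrB; apply: eq_bigr => x _.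
by rewrite -sumrB; apply: eq_bigr => z _; rewrite mulrBr.
Qed.

Lemma q_expect_sqr_scale tau (c : C) A :
  q_expect tau (q_opmul (fun x y => c * A x y) (fun x y => c * A x y))
  = c ^+ 2 * q_expect tau (q_opmul A A).
Proof.
rewrite /q_expect /q_optr /q_opmul mulr_sumr; apply: eq_bigr => x _.
rewrite mulr_sumr; apply: eq_bigr => z _; rewrite [RHS]mulrCA [in RHS]mulr_sumr.
by congr (_ * _); apply: eq_bigr => w _; ring.
Qed.

Lemma q_opmul_scalar (a b : C) :
  q_opmul (fun x y : T => (x == y)%:R * a) (fun x y : T => (x == y)%:R * b)
  = fun x y => (x == y)%:R * (a * b).
Proof.
apply: functional_extensionality => x; apply: functional_extensionality => y.
by rewrite /q_opmul; under eq_bigr do rewrite mulrCA; rewrite sum_delta mulrA.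
Qed.

Lemma q_expect_scalar tau (c : C) : q_optr tau = 1 ->
  q_expect tau (fun x y => (x == y)%:R * c) = c.
Proof.
move=> tr_tau; transitivity (q_optr tau * c); last by rewrite tr_tau mul1r.
rewrite /q_expect /q_opmul /q_optr mulr_suml.
by apply: eq_bigr => x _; under eq_bigr do rewrite mulrCA; rewrite sum_delta.
Qed.

Lemma q_hermitianB A B : q_hermitian A -> q_hermitian B -> q_hermitian (q_opsub A B).
Proof. by move=> hA hB x y; rewrite /q_opsub hA hB rmorphB. Qed.

Lemma q_expect_sqr_ge0 tau V : q_psd tau -> q_hermitian V ->
  0 <= q_expect tau (q_opmul V V).
Proof.
move=> psd_tau hV.
suff -> : q_expect tau (q_opmul V V) =
    \sum_w \sum_x \sum_y (V x w)^* * tau x y * V y w.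
  by apply: sumr_ge0 => w _; apply: psd_tau.
rewrite [RHS]exchange_big; apply: eq_bigr => x _.
rewrite [RHS]exchange_big; apply: eq_bigr => y _.
by rewrite mulr_sumr; apply: eq_bigr => w _; rewrite -hV; ring.
Qed.

Lemma q_psd_of_gram (U : finType) (G : U -> T -> C) A :
  (forall x y, A x y = \sum_u (G u x)^* * G u y) -> q_psd A.
Proof.
move=> AE v; pose w u := \sum_y G u y * v y.
suff -> : \sum_x \sum_y (v x)^* * A x y * v y = \sum_u (w u)^* * w u.
  by apply: sumr_ge0 => u _; rewrite mulrC mul_conjC_ge0.
under eq_bigr => x _ do under eq_bigr => y _ do rewrite AE mulr_sumr mulr_suml.
under eq_bigr => x _ do rewrite exchange_big.
rewrite exchange_big; apply: eq_bigr => u _.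
rewrite /w rmorph_sum big_distrl /=; apply: eq_bigr => x _.
rewrite big_distrr /=; apply: eq_bigr => y _.
by rewrite rmorphM; ring.
Qed.

Lemma q_psd_hermitian A : q_psd A -> q_hermitian A.
Proof.
(* The quadratic form is real at [v = al e_a + be e_b]; [(al, be) = (1, 1), (1, 'i)]
   polarize. *)
move=> psdA a b; set p := A a b; set q := A b a.
pose form (al be : C) := al^* * al * A a a + al^* * be * p
  + be^* * al * q + be^* * be * A b b.
have form_real al be : (form al be)^* = form al be.
  pose v x := (x == a)%:R * al + (x == b)%:R * be.
  suff <- : \sum_x \sum_y (v x)^* * A x y * v y = form al be.
    exact/conj_Creal/ger0_real/psdA.
  have rowE x : \sum_y (v x)^* * A x y * v y = (v x)^* * (A x a * al + A x b * be).
    under eq_bigr do rewrite /v mulrDr !mulrA [_ * (_ == b)%:R]mulrC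
      [_ * (_ == a)%:R]mulrC -!mulrA.
    by rewrite big_split /= !sum_delta mulrDr !mulrA.
  under eq_bigr do rewrite rowE /v rmorphD !rmorphM /= !conjC_nat mulrDl -!mulrA.
  by rewrite big_split /= !sum_delta /form /p /q; ring.
have haa : (A a a)^* = A a a.
  by have := form_real 1 0; rewrite /form !(rmorph0, rmorph1, mul0r, mulr0, mul1r, addr0).
have hbb : (A b b)^* = A b b.
  by have := form_real 0 1; rewrite /form !(rmorph0, rmorph1, mul0r, mulr0, mul1r, add0r).
have e1 : p^* + q^* - (p + q) = 0.
  transitivity ((form 1 1)^* - form 1 1); last by rewrite form_real subrr.
  by rewrite /form !rmorphD !rmorphM /= !rmorph1 haa hbb; ring.
have /eqP : 'i * (q^* - p^* - (p - q)) = 0.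
  transitivity ((form 1 'i)^* - form 1 'i); last by rewrite form_real subrr.
  by rewrite /form !rmorphD !rmorphM /= rmorph1 conjCK conjCi haa hbb; ring.
rewrite mulf_eq0 (negbTE (neq0Ci C)) /= => /eqP e2.
have : (q^* - p) *+ 2 = (p^* + q^* - (p + q)) + (q^* - p^* - (p - q)) by ring.
by rewrite e1 e2 addr0 => /eqP; rewrite mulrn_eq0 subr_eq0 => /eqP <-; rewrite conjCK.
Qed.

End Operators.

Section Gram.
Local Open Scope sesquilinear_scope.
Variables (C : numClosedFieldType) (m : nat) (A : op C 'I_m).

Let M : 'M[C]_m := \matrix_(a, b) A a b.

(* Row [k] of [sqrt(diag s) P], where [A = P^* diag(s) P] is the spectral decomposition. *)
Definition q_gram (k a : 'I_m) : C := sqrtC (spectral_diag M 0 k) * spectralmx M k a.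

Lemma q_psd_gram : q_psd A -> forall a b, A a b = \sum_k (q_gram k a)^* * q_gram k b.
Proof.
move=> psdA a b; set P := spectralmx M; set s := spectral_diag M.
have Mherm : M \is hermsymmx.
  apply/is_hermitianmxP; rewrite expr0 scale1r; apply/matrixP => i j.
  by rewrite !mxE (q_psd_hermitian psdA).
have /orthomx_spectralP ME := hermitian_normalmx Mherm.
have Punitary : P \is unitarymx := spectral_unitarymx M.
rewrite -/P -/s invmx_unitary // in ME.
have Mdiag : P *m M *m P ^t* = diag_mx s.
  by rewrite {1}ME !mulmxA (unitarymxP Punitary) mul1mx -mulmxA (unitarymxP Punitary) mulmx1.
have s_ge0 k : 0 <= s 0 k.
  have -> : s 0 k = diag_mx s k k by rewrite mxE eqxx mulr1n.
  rewrite -Mdiag mxE; have := psdA (fun b => (P k b)^*).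
  congr (0 <= _); rewrite exchange_big; apply: eq_bigr => j _; rewrite !mxE mulr_suml.
  by apply: eq_bigr => i _; rewrite conjCK !mxE.
have -> : A a b = M a b by rewrite mxE.
rewrite {1}ME mxE; apply: eq_bigr => k _.
rewrite mul_mx_diag !mxE /q_gram rmorphM /= [(sqrtC _)^*]geC0_conj ?sqrtC_ge0 //.
by rewrite -/P -/s [RHS]mulrACA -expr2 sqrtCK; ring.
Qed.

End Gram.

Lemma q_psd_prod_state (C : numClosedFieldType) n (d : 'I_n -> nat)
    (rho : forall i : 'I_n, op C 'I_(d i)) :
  (forall i, q_psd (rho i)) -> q_psd (q_prod_state rho).
Proof.
move=> psd_rho.
apply: (q_psd_of_gram (G := fun f x : q_idx d => \prod_i q_gram (rho i) (f i) (x i))) => x y.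
rewrite /q_prod_state; under eq_bigr do rewrite q_psd_gram //.
rewrite -(sum_dffun_prod (fun i k => (q_gram (rho i) k (x i))^* * q_gram (rho i) k (y i))).
by apply: eq_bigr => f _; rewrite rmorph_prod -big_split.
Qed.

Section TrivialAt.
Variables (C : numClosedFieldType) (n : nat) (d : 'I_n -> nat).
Local Notation T := (q_idx d).
Implicit Types (x y w : T) (k : 'I_n) (A : op C T).

(* [A] acts as the identity on the [k]-th tensor factor, i.e. [A = A' (x) I_(H_k)]. *)
Definition q_trivial_at k A := forall x y (a b : 'I_(d k)),
  A (q_upd x a) (q_upd y b) = (a == b)%:R * A x (q_upd y (x k)).

Lemma q_trivial_atE k A x y : q_trivial_at k A ->
  A x y = (x k == y k)%:R * A x (q_upd y (x k)).
Proof. by move=> trivA; rewrite -{1}(q_upd_id x k) -{1}(q_upd_id y k) trivA. Qed.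

Lemma q_trivial_at_all_scalar A z : (forall k, q_trivial_at k A) ->
  A = fun x y => (x == y)%:R * A z z.
Proof.
move=> trivA; apply: functional_extensionality => x; apply: functional_extensionality => y /=.
have [<-|xy] := eqVneq x y.
  rewrite mulr1n mul1r; apply/esym.
  apply: (q_idx_upd_ind (P := fun w => A w w = A x x)) => // w k a <-.
  by rewrite trivA eqxx mul1r q_upd_id.
have /forallPn[k xyk] : ~~ [forall k, x k == y k].
  by apply: contra xy => /forallP xy; apply/eqP/ffunP => k; apply/eqP.
by rewrite (q_trivial_atE _ _ (trivA k)) (negbTE xyk) mulr0n !mul0r.
Qed.

Lemma q_acts_on2_trivial_at i j k A :
  q_acts_on2 i j A -> k != i -> k != j -> q_trivial_at k A.
Proof.
case=> Y AE ki kj x y a b; rewrite !AE !(q_upd_other _ _ ki) !(q_upd_other _ _ kj).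
pose off m := (m != i) && (m != j).
suff -> : [forall m, off m ==> (q_upd x a m == q_upd y b m)] =
          (a == b) && [forall m, off m ==> (x m == q_upd y (x k) m)].
  by case: (a == b); rewrite ?mul1r ?mul0r ?mulr0.
apply/forallP/andP => [agree|[/eqP <- agree] m].
  split; first by have := agree k; rewrite /off ki kj !q_upd_same.
  apply/forallP => m; have [<-|km] := eqVneq k m; first by rewrite q_upd_same eqxx implybT.
  by have := agree m; rewrite !q_upd_other.
have [<-|km] := eqVneq k m; first by rewrite !q_upd_same eqxx implybT.
by have := forallP agree m; rewrite !q_upd_other.
Qed.

Variables (k : 'I_n) (A : op C T).
Hypothesis trivA : q_trivial_at k A.

Lemma q_trivial_at_sum_row x (F : T -> C) :
  \sum_(w : T) A x w * F w = \sum_(w : T | w k == x k) A x w * F w.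
Proof.
rewrite [RHS]big_mkcond; apply: eq_bigr => w _; rewrite (q_trivial_atE x w trivA) eq_sym.
by case: (w k == x k); rewrite ?mul0r.
Qed.

Lemma q_trivial_at_sum_col y (F : T -> C) :
  \sum_(w : T) F w * A w y = \sum_(w : T | w k == y k) F w * A w y.
Proof.
rewrite [RHS]big_mkcond; apply: eq_bigr => w _; rewrite (q_trivial_atE w y trivA).
by case: (w k == y k); rewrite ?mul0r ?mulr0.
Qed.

Lemma q_trivial_at_sum_row_upd x (b : 'I_(d k)) (F : T -> C) :
  \sum_(w : T) A (q_upd x b) w * F w = \sum_(w : T | w k == x k) A x w * F (q_upd w b).
Proof.
rewrite (big_q_upd (x k)); apply: eq_bigr => w /eqP wk.
under eq_bigr do rewrite trivA (q_upd_eq wk) eq_sym -mulrA.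
by rewrite sum_delta.
Qed.

Lemma q_trivial_at_sum_col_upd y (a : 'I_(d k)) (F : T -> C) :
  \sum_(w : T) F w * A w (q_upd y a) = \sum_(w : T | w k == y k) F (q_upd w a) * A w y.
Proof.
rewrite (big_q_upd (y k)); apply: eq_bigr => w /eqP wk.
under eq_bigr do rewrite trivA wk q_upd_id mulrCA.
by rewrite sum_delta.
Qed.

End TrivialAt.

Section Swap.
Variables (C : numClosedFieldType) (n : nat) (d : 'I_n -> nat).
Local Notation T := (q_idx d).
Implicit Types (i : 'I_n) (Y : op C T).

Definition q_swap i (q : (T * T)%type) : (T * T)%type :=
  (q_upd q.1 (q.2 i), q_upd q.2 (q.1 i)).

Lemma q_opmul_swapop i (A : op C (T * T)%type) p q :
  q_opmul A (@q_swapop C n d i) p q = A p (q_swap i q).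
Proof.
rewrite /q_opmul; under eq_bigr => r _ do rewrite mulrC.
rewrite -(sum_delta (q_swap i q) (A p)); apply: eq_bigr => -[r1 r2] _.
by rewrite /q_swapop /q_swap xpair_eqE.
Qed.

Lemma q_swap_sandwichE i Y q p :
  q_opmul (q_opmul (q_opmul (q_optensor Y (@q_opid C T)) (@q_swapop C n d i))
                   (q_optensor Y (@q_opid C T))) (@q_swapop C n d i) q p =
  \sum_(t : T) (q.2 == q_upd p.2 (t i))%:R
                * (Y q.1 (q_upd t (p.1 i)) * Y t (q_upd p.1 (p.2 i))).
Proof.
rewrite q_opmul_swapop q_opmulE sum_pair; apply: eq_bigr => t1 _.
under eq_bigr do rewrite q_opmul_swapop.
rewrite /q_optensor /q_opid /q_swap /=.
under eq_bigr do rewrite mulrA mulrC.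
by rewrite sum_delta /= q_upd_same q_upd_upd mulrCA mulrA.
Qed.

End Swap.

Section ConditionalExpectation.
Variables (C : numClosedFieldType) (n : nat) (d : 'I_n -> nat).
Variable rho : forall i : 'I_n, op C 'I_(d i).
Arguments rho : clear implicits.
Hypothesis rho_tr1 : forall i, \sum_(a : 'I_(d i)) rho i a a = 1.
Local Notation T := (q_idx d).
Local Notation varrho := (q_prod_state rho).
Local Notation Ek := (q_condexp rho).
Implicit Types (x y z w : T) (k l : 'I_n) (A B Y V : op C T).

Definition q_ptrace k Y x y : C :=
  \sum_(a : 'I_(d k)) \sum_(b : 'I_(d k)) rho k a b * Y (q_upd x b) (q_upd y a).

Lemma q_condexpE k Y x y : Ek k Y x y = (x k == y k)%:R * q_ptrace k Y x y.
Proof. by []. Qed.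

Lemma q_ptrace_updl k Y x y (a : 'I_(d k)) : q_ptrace k Y (q_upd x a) y = q_ptrace k Y x y.
Proof. by apply: eq_bigr => a' _; apply: eq_bigr => b' _; rewrite q_upd_upd. Qed.

Lemma q_ptrace_updr k Y x y (b : 'I_(d k)) : q_ptrace k Y x (q_upd y b) = q_ptrace k Y x y.
Proof. by apply: eq_bigr => a' _; apply: eq_bigr => b' _; rewrite q_upd_upd. Qed.

Lemma q_trivial_at_condexp k Y : q_trivial_at k (Ek k Y).
Proof.
move=> x y a b; rewrite !q_condexpE !q_upd_same eqxx mul1r.
by rewrite !q_ptrace_updl !q_ptrace_updr.
Qed.

Lemma q_ptrace_trivial_at k A x y : q_trivial_at k A ->
  q_ptrace k A x y = A x (q_upd y (x k)).
Proof.
move=> trivA; rewrite /q_ptrace -[RHS]mul1r -(rho_tr1 k) mulr_suml.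
apply: eq_bigr => a _; under eq_bigr do rewrite trivA mulrCA.
by rewrite sum_delta.
Qed.

Lemma q_condexp_trivial_at k A : q_trivial_at k A -> Ek k A = A.
Proof.
move=> trivA; apply: functional_extensionality => x; apply: functional_extensionality => y.
by rewrite q_condexpE q_ptrace_trivial_at // -(q_trivial_atE _ _ trivA).
Qed.

Lemma q_ptrace_condexp k Y x y : q_ptrace k (Ek k Y) x y = q_ptrace k Y x y.
Proof.
rewrite q_ptrace_trivial_at; last exact: q_trivial_at_condexp.
by rewrite q_condexpE q_upd_same eqxx mul1r q_ptrace_updr.
Qed.

Definition q_prod_state_but k x y : C := \prod_(j | j != k) rho j (x j) (y j).

Lemma q_prod_state_upd k x y (a b : 'I_(d k)) :
  varrho (q_upd x a) (q_upd y b) = rho k a b * q_prod_state_but k x y.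
Proof.
rewrite /q_prod_state (bigD1 k) //= !q_upd_same; congr (_ * _).
by apply: eq_bigr => j jk; rewrite !q_upd_other // eq_sym.
Qed.

Lemma q_optr_prod_state : q_optr varrho = 1.
Proof.
rewrite /q_optr /q_prod_state (sum_dffun_prod (fun i a => rho i a a)).
by apply: big1 => i _; apply: rho_tr1.
Qed.

Lemma q_expect_split k (c : 'I_(d k)) Y : q_expect varrho Y =
  \sum_(x : T | x k == c) \sum_(z : T | z k == c) q_prod_state_but k x z * q_ptrace k Y z x.
Proof.
rewrite /q_expect /q_optr /q_opmul (big_q_upd c); apply: eq_bigr => x _.
under eq_bigr do rewrite (big_q_upd c).
rewrite exchange_big /=; apply: eq_bigr => z _; rewrite /q_ptrace mulr_sumr.
apply: eq_bigr => a _; rewrite mulr_sumr; apply: eq_bigr => b _.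
by rewrite q_prod_state_upd mulrAC mulrC.
Qed.

Lemma q_expect_condexp k Y : q_expect varrho (Ek k Y) = q_expect varrho Y.
Proof.
have [dk0|dk_gt0] := posnP (d k).
  by rewrite /q_expect /q_optr !(big_q_idx_dim0 _ dk0).
rewrite !(q_expect_split (Ordinal dk_gt0)).
by under eq_bigr do under eq_bigr do rewrite q_ptrace_condexp.
Qed.

Lemma q_condexp_mull k A B : q_trivial_at k A -> Ek k (q_opmul A B) = q_opmul A (Ek k B).
Proof.
move=> trivA; apply: functional_extensionality => x; apply: functional_extensionality => y.
rewrite q_condexpE /q_ptrace /q_opmul.
under eq_bigr do under eq_bigr do rewrite (q_trivial_at_sum_row_upd trivA) mulr_sumr.
rewrite (q_trivial_at_sum_row trivA).
under [RHS]eq_bigr => w /eqP wk do rewrite q_condexpE wk mulrCA.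
rewrite -mulr_sumr; congr (_ * _).
under [RHS]eq_bigr do rewrite mulr_sumr.
rewrite [RHS]exchange_big /=; apply: eq_bigr => a _.
under [RHS]eq_bigr do rewrite mulr_sumr.
rewrite [RHS]exchange_big /=; apply: eq_bigr => b _.
by apply: eq_bigr => w _; rewrite mulrCA.
Qed.

Lemma q_condexp_mulr k A B : q_trivial_at k A -> Ek k (q_opmul B A) = q_opmul (Ek k B) A.
Proof.
move=> trivA; apply: functional_extensionality => x; apply: functional_extensionality => y.
rewrite q_condexpE /q_ptrace /q_opmul.
under eq_bigr do under eq_bigr do rewrite (q_trivial_at_sum_col_upd trivA) mulr_sumr.
rewrite (q_trivial_at_sum_col trivA).
under [RHS]eq_bigr => w /eqP wk do rewrite q_condexpE wk -mulrA.
rewrite -mulr_sumr; congr (_ * _).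
under [RHS]eq_bigr do rewrite mulr_suml.
rewrite [RHS]exchange_big /=; apply: eq_bigr => a _.
under [RHS]eq_bigr do rewrite mulr_suml.
rewrite [RHS]exchange_big /=; apply: eq_bigr => b _.
by apply: eq_bigr => w _; rewrite mulrA.
Qed.

Lemma q_condexp2E k l Y x y : k != l -> Ek k (Ek l Y) x y =
  (x k == y k)%:R * (x l == y l)%:R *
  \sum_(a : 'I_(d k)) \sum_(b : 'I_(d k)) \sum_(a' : 'I_(d l)) \sum_(b' : 'I_(d l))
    rho k a b * rho l a' b' * Y (q_upd (q_upd x b) b') (q_upd (q_upd y a) a').
Proof.
move=> kl; rewrite q_condexpE -mulrA; congr (_ * _).
rewrite /q_ptrace mulr_sumr; apply: eq_bigr => a _; rewrite mulr_sumr; apply: eq_bigr => b _.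
rewrite q_condexpE !q_upd_other // mulrCA; congr (_ * _).
rewrite /q_ptrace mulr_sumr; apply: eq_bigr => a' _; rewrite mulr_sumr; apply: eq_bigr => b' _.
by rewrite mulrA.
Qed.

Lemma q_condexpC k l Y : Ek k (Ek l Y) = Ek l (Ek k Y).
Proof.
have [<-//|kl] := eqVneq k l.
apply: functional_extensionality => x; apply: functional_extensionality => y.
have lk : l != k by rewrite eq_sym.
rewrite !q_condexp2E // [_ * (x l == y l)%:R]mulrC; congr (_ * _).
under eq_bigr do rewrite exchange_big /=.
rewrite exchange_big /=; apply: eq_bigr => a' _.
under eq_bigr do rewrite exchange_big /=.
rewrite exchange_big /=; apply: eq_bigr => b' _.
apply: eq_bigr => a _; apply: eq_bigr => b _.
by rewrite [rho k a b * _]mulrC !(q_updC _ _ _ kl).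
Qed.

Lemma q_trivial_at_condexp_other k l Y :
  l != k -> q_trivial_at k Y -> q_trivial_at k (Ek l Y).
Proof.
move=> lk trivY x y a b; have kl : k != l by rewrite eq_sym.
rewrite !q_condexpE !(q_upd_other _ _ kl) mulrCA; congr (_ * _).
rewrite /q_ptrace mulr_sumr; apply: eq_bigr => a' _; rewrite mulr_sumr; apply: eq_bigr => b' _.
rewrite (q_updC x _ _ kl) (q_updC y _ _ kl) trivY (q_upd_other _ _ lk).
by rewrite (q_updC y _ _ lk) mulrCA.
Qed.

Lemma q_condexpB k A B : Ek k (q_opsub A B) = q_opsub (Ek k A) (Ek k B).
Proof.
apply: functional_extensionality => x; apply: functional_extensionality => y.
rewrite /q_opsub !q_condexpE -mulrBr -sumrB; congr (_ * _); apply: eq_bigr => a _.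
by rewrite -sumrB; apply: eq_bigr => b _; rewrite mulrBr.
Qed.

Lemma q_condexp_sum k (I : finType) (P : pred I) (F : I -> op C T) x y :
  Ek k (fun x y => \sum_(i | P i) F i x y) x y = \sum_(i | P i) Ek k (F i) x y.
Proof.
under [RHS]eq_bigr do rewrite q_condexpE.
rewrite q_condexpE -mulr_sumr; congr (_ * _); rewrite /q_ptrace [RHS]exchange_big /=.
apply: eq_bigr => a _; rewrite [RHS]exchange_big /=.
by apply: eq_bigr => b _; rewrite mulr_sumr.
Qed.

Lemma q_DopE k Y : q_Dop rho k Y = q_opsub Y (Ek k Y).
Proof. by []. Qed.

Lemma q_Dop_sum k (I : finType) (P : pred I) (F : I -> op C T) x y :
  q_Dop rho k (fun x y => \sum_(i | P i) F i x y) x y = \sum_(i | P i) q_Dop rho k (F i) x y.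
Proof. by rewrite /q_Dop q_condexp_sum -sumrB. Qed.

Lemma q_expect_condexp_sqr k V :
  q_expect varrho (q_opmul (Ek k V) (Ek k V)) = q_expect varrho (q_opmul V (Ek k V)).
Proof.
by rewrite -[RHS](q_expect_condexp k) (q_condexp_mulr _ (q_trivial_at_condexp V)).
Qed.

Lemma q_expect_Dop_sqr k V :
  q_expect varrho (q_opmul (q_Dop rho k V) (q_Dop rho k V))
  = q_expect varrho (q_opmul V V) - q_expect varrho (q_opmul V (Ek k V)).
Proof.
rewrite q_DopE q_opmulBl !q_opmulBr !q_expectB.
rewrite -[q_expect _ (q_opmul (Ek k V) V)](q_expect_condexp k).
by rewrite (q_condexp_mull _ (q_trivial_at_condexp V)) subrr subr0.
Qed.

Lemma sum_q_prod_state_but k (c : 'I_(d k)) :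
  \sum_(x : T | x k == c) q_prod_state_but k x x = 1.
Proof.
rewrite -q_optr_prod_state /q_optr (big_q_upd c); apply: eq_bigr => x _.
by under eq_bigr do rewrite q_prod_state_upd; rewrite -mulr_suml rho_tr1 mul1r.
Qed.

Lemma sum_q_prod_state_upd i (b : 'I_(d i)) (G : 'I_(d i) -> C) :
  \sum_(p : T) varrho p (q_upd p b) * G (p i) = \sum_a rho i a b * G a.
Proof.
rewrite (big_q_upd b).
under eq_bigr do under eq_bigr do rewrite q_upd_upd q_prod_state_upd q_upd_same mulrAC.
rewrite -(mulr1 (\sum_a _)) -(sum_q_prod_state_but b) mulr_sumr.
by under [RHS]eq_bigr do rewrite mulr_suml.
Qed.

Lemma q_expect_swap_sandwich i Y :
  q_expect (q_optensor varrho varrho)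
    (q_opmul (q_opmul (q_opmul (q_optensor Y (@q_opid C T)) (@q_swapop C n d i))
                      (q_optensor Y (@q_opid C T))) (@q_swapop C n d i))
  = q_expect varrho (q_opmul Y (Ek i Y)).
Proof.
rewrite /q_expect /q_optr sum_pair; apply: eq_bigr => x _.
under eq_bigr do rewrite q_opmulE sum_pair.
rewrite q_opmulE exchange_big /=; apply: eq_bigr => z _.
under eq_bigr do under eq_bigr do rewrite q_swap_sandwichE /q_optensor /= mulr_sumr.
under eq_bigr do rewrite exchange_big /=.
under eq_bigr do under eq_bigr do under eq_bigr do rewrite mulrCA.
under eq_bigr do under eq_bigr do rewrite sum_delta mulrAC mulrC.
rewrite exchange_big /=.
under eq_bigr => t _ do rewrite (sum_q_prod_state_upd (t i)
  (fun a => varrho x z * (Y z (q_upd t (x i)) * Y t (q_upd x a)))).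
(* The right side, restricted to [w i = x i] and reindexed by [q_upd w b], matches termwise. *)
rewrite q_opmulE (q_trivial_at_sum_col (q_trivial_at_condexp Y)) mulr_sumr.
rewrite (big_q_upd (x i)); apply: eq_bigr => w /eqP wx.
rewrite q_condexpE wx eqxx mul1r /q_ptrace exchange_big !mulr_sumr; apply: eq_bigr => a _.
rewrite !mulr_sumr; apply: eq_bigr => b _.
by rewrite q_upd_same q_upd_upd -wx q_upd_id; ring.
Qed.

Lemma q_expect_sqr_scalar K : (forall k, q_trivial_at k K) ->
  q_expect varrho (q_opmul K K) = q_expect varrho K ^+ 2.
Proof.
move=> trivK; have [z _|T0] := pickP (@predT T); last first.
  by rewrite /q_expect /q_optr !big_pred0 // expr0n.
rewrite (q_trivial_at_all_scalar z trivK) q_opmul_scalar.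
by rewrite !q_expect_scalar ?q_optr_prod_state.
Qed.

Definition q_condexp_seq (s : seq 'I_n) Y := foldr Ek Y s.

Lemma q_expect_condexp_seq s Y : q_expect varrho (q_condexp_seq s Y) = q_expect varrho Y.
Proof. by elim: s => //= k s IH; rewrite q_expect_condexp. Qed.

Lemma q_condexp_seqB s A B :
  q_condexp_seq s (q_opsub A B) = q_opsub (q_condexp_seq s A) (q_condexp_seq s B).
Proof. by elim: s => //= k s ->; rewrite q_condexpB. Qed.

Lemma q_condexp_seqC k s Y : Ek k (q_condexp_seq s Y) = q_condexp_seq s (Ek k Y).
Proof. by elim: s => //= l s <-; rewrite q_condexpC. Qed.

Lemma q_Dop_condexp_seq k s Y :
  q_Dop rho k (q_condexp_seq s Y) = q_condexp_seq s (q_Dop rho k Y).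
Proof. by rewrite !q_DopE q_condexp_seqB q_condexp_seqC. Qed.

Lemma q_trivial_at_condexp_seq k s Y : k \in s -> q_trivial_at k (q_condexp_seq s Y).
Proof.
elim: s => //= l s IH; rewrite inE; have [<- _|kl /= ks] := eqVneq k l.
  exact: q_trivial_at_condexp.
by apply: q_trivial_at_condexp_other; [rewrite eq_sym | apply: IH].
Qed.

Section Positivity.
Hypothesis rho_psd : forall i, q_psd (rho i).

Lemma q_hermitian_condexp k Y : q_hermitian Y -> q_hermitian (Ek k Y).
Proof.
move=> hY x y; rewrite !q_condexpE rmorphM /= conjC_nat eq_sym; congr (_ * _).
rewrite /q_ptrace rmorph_sum /= exchange_big; apply: eq_bigr => a _.
rewrite rmorph_sum /=; apply: eq_bigr => b _.
by rewrite rmorphM /= -(q_psd_hermitian (@rho_psd k)) -hY.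
Qed.

Lemma q_hermitian_Dop k Y : q_hermitian Y -> q_hermitian (q_Dop rho k Y).
Proof. by move=> hY; apply: q_hermitianB => //; apply: q_hermitian_condexp. Qed.

Lemma q_hermitian_condexp_seq s Y : q_hermitian Y -> q_hermitian (q_condexp_seq s Y).
Proof. by move=> hY; elim: s => //= k s; apply: q_hermitian_condexp. Qed.

Lemma q_expect_sqr_condexp_le k V : q_hermitian V ->
  q_expect varrho (q_opmul (Ek k V) (Ek k V)) <= q_expect varrho (q_opmul V V).
Proof.
move=> hV; rewrite -subr_ge0 q_expect_condexp_sqr -q_expect_Dop_sqr.
by apply: q_expect_sqr_ge0; [apply: q_psd_prod_state | apply: q_hermitian_Dop].
Qed.

Lemma q_expect_sqr_condexp_seq_le s V : q_hermitian V ->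
  q_expect varrho (q_opmul (q_condexp_seq s V) (q_condexp_seq s V))
  <= q_expect varrho (q_opmul V V).
Proof.
move=> hV; elim: s => //= k s IH; apply: le_trans IH.
by apply: q_expect_sqr_condexp_le; apply: q_hermitian_condexp_seq.
Qed.

Lemma q_efron_stein_seq s X : q_hermitian X ->
  q_expect varrho (q_opmul X X)
    - q_expect varrho (q_opmul (q_condexp_seq s X) (q_condexp_seq s X))
  <= \sum_(k <- s) q_expect varrho (q_opmul (q_Dop rho k X) (q_Dop rho k X)).
Proof.
move=> hX; elim: s => [|k s IH] /=; first by rewrite subrr big_nil.
set P := q_condexp_seq s X; rewrite big_cons.
have -> : q_expect varrho (q_opmul X X) - q_expect varrho (q_opmul (Ek k P) (Ek k P))
  = q_expect varrho (q_opmul (q_Dop rho k P) (q_Dop rho k P))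
    + (q_expect varrho (q_opmul X X) - q_expect varrho (q_opmul P P)).
  by rewrite q_expect_Dop_sqr -q_expect_condexp_sqr; ring.
apply: lerD IH; rewrite q_Dop_condexp_seq.
by apply: q_expect_sqr_condexp_seq_le; apply: q_hermitian_Dop.
Qed.

Theorem q_efron_stein X : q_hermitian X ->
  q_variance varrho X <= \sum_k q_expect varrho (q_opmul (q_Dop rho k X) (q_Dop rho k X)).
Proof.
move=> hX; pose P := q_condexp_seq (index_enum 'I_n) X.
have trivP k : q_trivial_at k P by apply/q_trivial_at_condexp_seq/mem_index_enum.
rewrite /q_variance -[q_expect varrho X](q_expect_condexp_seq (index_enum 'I_n)) -/P.
by rewrite -(q_expect_sqr_scalar trivP); apply: q_efron_stein_seq.
Qed.

End Positivity.

Section PairInteraction.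
Variable X : 'I_n -> 'I_n -> op C T.
Hypothesis X_sym : forall i j, i != j -> X i j = X j i.
Hypothesis X_local : forall i j, i != j -> q_acts_on2 i j (X i j).

Definition q_pair_sum_at i : op C T := fun x y => \sum_(j | j != i) X i j x y.
Definition q_pair_sum : op C T := fun x y => \sum_i \sum_(j | j != i) X i j x y.

Lemma q_Dop_pair_sum k :
  q_Dop rho k q_pair_sum = fun x y => 2 * q_Dop rho k (q_pair_sum_at k) x y.
Proof.
apply: functional_extensionality => x; apply: functional_extensionality => y /=.
pose D i j := q_Dop rho k (X i j) x y.
have D0 i j : i != j -> k != i -> k != j -> D i j = 0.
  move=> ij ki kj; rewrite /D q_DopE /q_opsub q_condexp_trivial_at ?subrr //.
  exact: q_acts_on2_trivial_at (X_local ij) ki kj.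
rewrite /q_pair_sum /q_pair_sum_at !q_Dop_sum; under eq_bigr do rewrite q_Dop_sum.
rewrite (bigD1 k) //= mulr_natl mulr2n; congr (_ + _).
apply: eq_bigr => i ik; rewrite (bigD1 k) 1?eq_sym //= big1 ?addr0.
  by rewrite X_sym.
by move=> j /andP[ji jk]; apply: D0; rewrite // eq_sym.
Qed.

End PairInteraction.

End ConditionalExpectation.

Theorem corollary6p7 (C : numClosedFieldType) (n : nat) (d : 'I_n -> nat)
    (rho : forall i : 'I_n, op C 'I_(d i))
    (X : 'I_n -> 'I_n -> op C (q_idx d)) :
  (forall i : 'I_n, q_density (rho i)) ->
  (forall i j : 'I_n, i != j -> X i j = X j i) ->
  (forall i j : 'I_n, i != j -> q_hermitian (X i j) /\ q_acts_on2 i j (X i j)) ->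
  let varrho := q_prod_state rho in
  let Xi : 'I_n -> op C (q_idx d) := fun i x y => \sum_(j | j != i) X i j x y in
  let Xtot : op C (q_idx d) := fun x y => \sum_i \sum_(j | j != i) X i j x y in
  q_variance varrho Xtot
    <= 4 * \sum_i q_expect varrho (q_opmul (q_Dop rho i (Xi i)) (q_Dop rho i (Xi i)))
  /\ 4 * \sum_i q_expect varrho (q_opmul (q_Dop rho i (Xi i)) (q_Dop rho i (Xi i)))
     = 4 * \sum_i q_expect varrho (q_opmul (Xi i) (Xi i))
       - 4 * \sum_i q_expect (q_optensor varrho varrho)
               (q_opmul (q_opmul (q_opmul (q_optensor (Xi i) (@q_opid C (q_idx d))) (@q_swapop C n d i))
                             (q_optensor (Xi i) (@q_opid C (q_idx d))))
                      (@q_swapop C n d i)).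
Proof.
move=> rho_density X_sym X_herm_local varrho Xi Xtot.
have rho_tr1 i : \sum_a rho i a a = 1 by case: (rho_density i).
have rho_psd i : q_psd (rho i) by case: (rho_density i).
have X_herm i j (ij : i != j) := (X_herm_local i j ij).1.
have X_local i j (ij : i != j) := (X_herm_local i j ij).2.
have Xtot_herm : q_hermitian Xtot.
  move=> x y; rewrite rmorph_sum; apply: eq_bigr => i _.
  by rewrite rmorph_sum; apply: eq_bigr => j ji; apply: X_herm; rewrite eq_sym.
split.
  apply: le_trans (q_efron_stein rho_tr1 rho_psd Xtot_herm) _.
  rewrite mulr_sumr; apply: ler_sum => k _.
  rewrite -[Xtot]/(q_pair_sum X) (q_Dop_pair_sum rho_tr1 X_sym X_local) q_expect_sqr_scale.
  by rewrite -natrX.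
rewrite -mulrBr -sumrB; congr (_ * _); apply: eq_bigr => i _.
by rewrite q_expect_Dop_sqr // q_expect_swap_sandwich.
Qed.
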